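(* In a Gibbs-type feature model with parameters $\alpha<1$, $\theta>-\alpha$ and weights $(V_{n,k})$, let $\mathbf Z^{(n)}$ be a sample with $K_n=k$ observed features and, for $m\ge1$, let $K^{(n)}_m$ be the number of distinct features displayed by individuals $n+1,\dots,n+m$ that are not among the $k$ features observed in $\mathbf Z^{(n)}$. Then for every $y\ge0$, $$P(K^{(n)}_m=y\mid\mathbf Z^{(n)})=\binom{k+y}{k}\frac{V_{n+m,k+y}}{V_{n,k}}\{(\theta+n)_m\}^{k+y}\{c_{n,m}(\theta,\alpha)\}^y,$$ where $c_{n,m}(\theta,\alpha)=\frac{(\theta+\alpha)_n}{\alpha}\Big(\frac{(\theta+\alpha+n)_m}{(\theta+n)_m}-1\Big)$ if $\alpha<0$, and $c_{n,m}(\theta,\alpha)=(\theta+1)_{n-1}\{g_{n+m}(\theta,\alpha)-g_n(\theta,\alpha)\}$ if $\alpha\in[0,1)$, with $g_n(\theta,\alpha)=\sum_{i=1}^n\frac{(\theta+\alpha)_{i-1}}{(\theta+1)_{i-1}}$.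
   Context: Notation: $(x)_m=\Gamma(x+m)/\Gamma(x)$ (Pochhammer symbol); $[n]=\{1,\dots,n\}$. Individuals $i=1,2,\dots$ each display a finite (possibly empty) set of features, identified by almost surely distinct labels. For the sample $\mathbf Z^{(n)}=(Z_1,\dots,Z_n)$ of the first $n$ individuals, $K_n$ is the number of distinct features displayed, labelled $X_1,\dots,X_{K_n}$ in order of appearance; $A_{i,\ell}\in\{0,1\}$ indicates whether individual $i$ displays $X_\ell$, and $m_\ell=\sum_{i=1}^nA_{i,\ell}\in[n]$. The ordered feature allocation is $F_n=(B_{n,1},\dots,B_{n,K_n})$, $B_{n,\ell}=\{i\in[n]:A_{i,\ell}=1\}$. The model admits an exchangeable feature probability function (EFPF) if there are symmetric functions $\pi_n:\bigcup_{k\ge0}[n]^k\to[0,1]$ with $P(F_n=f_n)=\pi_n(m_1,\dots,m_k)$ for every ordered feature allocation $f_n$ of $[n]$ (a sequence of $k$ nonempty subsets of $[n]$ with sizes $m_1,\dots,m_k$), all orderings of the same collection of sets being equally likely; the laws for different $n$ are consistent. The model is a Gibbs-type feature model with parameters $\alpha<1$, $\theta>-\alpha$ if $\pi_n(m_1,\dots,m_k)=V_{n,k}\prod_{\ell=1}^k(1-\alpha)_{m_\ell-1}(\theta+\alpha)_{n-m_\ell}$ for nonnegative weights $(V_{n,k})_{n\ge1,k\ge0}$ satisfying $V_{n,k}=\sum_{j\ge0}\frac{(k+j)!}{j!\,k!}\{(\theta+\alpha)_n\}^j(\theta+n)^kV_{n+1,k+j}$. *)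

From HB Require Import structures.
From mathcomp Require Import all_boot all_order all_algebra.
From mathcomp Require Import all_classical all_reals all_analysis.
Set Implicit Arguments. Unset Strict Implicit. Unset Printing Implicit Defensive.
Import Order.TTheory GRing.Theory Num.Theory.
Import numFieldNormedType.Exports.
Local Open Scope classical_set_scope.
Local Open Scope ring_scope.

Definition poch {R : nzRingType} (x : R) (m : nat) : R :=
  \prod_(i < m) (x + i%:R).

(* A feature (block) of an allocation of [N] is encoded by its indicator
   column (A_{1,l}, ..., A_{N,l}) : seq bool of size N; individual i (1-based)
   corresponds to position i-1.  An ordered feature allocation of [N] is a
   sequence of nonempty blocks. *)
Definition is_ofa (N : nat) (f : seq (seq bool)) : bool :=
  all (fun b => (size b == N) && has id b) f.

Definition bsize (b : seq bool) : nat := count id b.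

Definition ofa_restrict (n : nat) (f : seq (seq bool)) : seq (seq bool) :=
  seq.filter (has id) (map (take n) f).

(* Number of features of an allocation of [n+m] not displayed by any of the
   first n individuals, i.e. K^{(n)}_m computed from F_{n+m}. *)
Definition new_count (n : nat) (f : seq (seq bool)) : nat :=
  count (fun b => ~~ has id (take n b)) f.

Definition gibbs_efpf {R : nzRingType} (alpha theta : R) (V : nat -> nat -> R)
  (N : nat) (f : seq (seq bool)) : R :=
  V N (size f) *
  \prod_(b <- f) (poch (1 - alpha) (bsize b).-1 * poch (theta + alpha) (N - bsize b)).

Definition gibbs_weights {R : realType} (alpha theta : R) (V : nat -> nat -> R) : Prop :=
  (forall n k, 0 <= V n k) /\
  (forall n k, (1 <= n)%N ->
     (fun J : nat => \sum_(0 <= j < J)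
        (((k + j)%N`!)%:R / ((j`!)%:R * (k`!)%:R)) *
        (poch (theta + alpha) n) ^+ j * (theta + n%:R) ^+ k * V n.+1 (k + j)%N)
     @ \oo --> V n k).

Definition gfun {R : fieldType} (theta alpha : R) (n : nat) : R :=
  \sum_(1 <= i < n.+1) poch (theta + alpha) i.-1 / poch (theta + 1) i.-1.

Definition cnm {R : realFieldType} (theta alpha : R) (n m : nat) : R :=
  if alpha < 0 then
    poch (theta + alpha) n / alpha *
      (poch (theta + alpha + n%:R) m / poch (theta + n%:R) m - 1)
  else
    poch (theta + 1) n.-1 * (gfun theta alpha (n + m) - gfun theta alpha n).

Definition condprob {R : realType} {d : measure_display} {T : measurableType d}
  (P : probability T R) (A B : set T) : R :=
  fine (P (A `&` B)) / fine (P B).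

From HB Require Import structures.
From mathcomp Require Import all_boot all_order all_algebra.
From mathcomp Require Import all_classical all_reals all_analysis.
From mathcomp Require Import ring zify lra.
Set Implicit Arguments. Unset Strict Implicit. Unset Printing Implicit Defensive.
Import Order.TTheory GRing.Theory Num.Theory.
Local Open Scope classical_set_scope.
Local Open Scope ring_scope.

(* Given F_n = f with k blocks, the allocations of [n+m] with restriction f and
   y new features are the sequences of k + y columns of length n + m such that
   the columns that are nonzero on the first n individuals restrict, in order,
   to the blocks of f, and the y others vanish there. Summing the EFPF over them
   factorises: the positions of the new columns give the binomial coefficient;
   by Chu-Vandermonde the extensions of a block of f have total weight its own
   EFPF factor times (theta+n)_m; and the new columns have total weight
   (theta+alpha)_n Q_m, where
     Q_m = sum_{v nonempty} (1-alpha)_{|v|-1} (theta+alpha+n)_{m-|v|}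
   satisfies a telescoping recursion whose solution is (theta+n)_m c_{n,m}. *)

Lemma poch0 {R : nzRingType} (x : R) : poch x 0 = 1.
Proof. by rewrite /poch big_ord0. Qed.

Lemma pochSl {R : nzRingType} (x : R) m : poch x m.+1 = x * poch (x + 1) m.
Proof.
rewrite /poch big_ord_recl /= addr0; congr (_ * _).
by apply: eq_bigr => i _; rewrite /bump /= add1n -nat1r addrA.
Qed.

Lemma pochSr {R : nzRingType} (x : R) m : poch x m.+1 = poch x m * (x + m%:R).
Proof. by rewrite /poch big_ord_recr. Qed.

Lemma pochD {R : nzRingType} (x : R) p q :
  poch x (p + q) = poch x p * poch (x + p%:R) q.
Proof.
rewrite /poch big_split_ord /=; congr (_ * _).
by apply: eq_bigr => i _; rewrite natrD addrA.
Qed.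

Lemma poch_gt0 {R : realFieldType} (x : R) k : 0 < x -> 0 < poch x k.
Proof.
move=> x_gt0; apply: prodr_gt0 => i _.
by apply: (lt_le_trans x_gt0); rewrite lerDl ler0n.
Qed.

Fixpoint bitseqs (N : nat) : seq (seq bool) :=
  if N is N'.+1 then [seq c :: s | c <- [:: true; false], s <- bitseqs N']
  else [:: [::]].

Lemma mem_bitseqs N s : (s \in bitseqs N) = (size s == N).
Proof.
have inj c : injective (cons c : seq bool -> _) by move=> x y [].
elim: N s => [|N IH] [|c s] //=; rewrite mem_cat cats0.
  by apply/norP; split; apply/negP => /mapP[].
have notin c' d L : c' != d -> (c' :: s \in [seq d :: t | t <- L]) = false.
  by move=> neq; apply/mapP => -[t _ [/eqP]]; rewrite (negbTE neq).
by rewrite eqSS -IH; case: c; rewrite (mem_map (inj _)) notin ?orbF.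
Qed.

Lemma uniq_bitseqs N : uniq (bitseqs N).
Proof.
have inj c : injective (cons c : seq bool -> _) by move=> x y [].
elim: N => [|N IH] //=; rewrite cats0 cat_uniq !map_inj_uniq // IH /= andbT.
by apply/hasPn => s /mapP [t _ ->]; apply/negP => /mapP [u _].
Qed.

Lemma count_id_negb (v : seq bool) : (count id v + count negb v)%N = size v.
Proof. exact: count_predC. Qed.

Lemma big_bitseqsS {R : nmodType} N (G : seq bool -> R) :
  \sum_(s <- bitseqs N.+1) G s =
  \sum_(s <- bitseqs N) G (true :: s) + \sum_(s <- bitseqs N) G (false :: s).
Proof. by rewrite /= cats0 big_cat !big_map. Qed.

Lemma big_bitseqsD {R : nmodType} n m (G : seq bool -> R) :
  \sum_(b <- bitseqs (n + m)%N) G b =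
  \sum_(u <- bitseqs n) \sum_(v <- bitseqs m) G (u ++ v).
Proof.
elim: n G => [|n IH] G; first by rewrite /= big_seq1.
by rewrite addSn !big_bitseqsS !IH.
Qed.

Lemma big_bitseqs_hasNid {R : nmodType} N (G : seq bool -> R) :
  \sum_(s <- bitseqs N | ~~ has id s) G s = G (nseq N false).
Proof.
elim: N G => [|N IH] G; first by rewrite /= big_mkcond big_seq1.
rewrite big_mkcond big_bitseqsS /= big1 // add0r -big_mkcond.
exact: (IH (fun s => G (false :: s))).
Qed.

Lemma poch_vandermonde {R : comNzRingType} m (a b : R) :
  \sum_(v <- bitseqs m) poch a (count id v) * poch b (count negb v) = poch (a + b) m.
Proof.
elim: m a b => [|m IH] a b; first by rewrite /= big_seq1 !poch0 mulr1.
rewrite big_bitseqsS /=.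
under eq_bigr do rewrite add1n add0n pochSl -mulrA.
under [X in _ + X]eq_bigr do rewrite add0n add1n pochSl mulrCA.
rewrite -!mulr_sumr !IH pochSl (addrAC a) -(addrA a b); ring.
Qed.

Definition nonempty_poch_sum {R : nzRingType} m (a b : R) : R :=
  \sum_(v <- bitseqs m | has id v) poch a (count id v).-1 * poch b (count negb v).

Lemma nonempty_poch_sum0 {R : nzRingType} (a b : R) : nonempty_poch_sum 0 a b = 0.
Proof. by rewrite /nonempty_poch_sum /= big_mkcond big_seq1. Qed.

Lemma nonempty_poch_sumS {R : comNzRingType} m (a b : R) :
  nonempty_poch_sum m.+1 a b = poch (a + b) m + b * nonempty_poch_sum m a (b + 1).
Proof.
rewrite /nonempty_poch_sum big_mkcond big_bitseqsS /= -big_mkcond /=.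
under eq_bigr do rewrite !add0n.
rewrite poch_vandermonde mulr_sumr; congr (_ + _).
by apply: eq_bigr => v _; rewrite add1n pochSl mulrCA.
Qed.

Lemma nonempty_poch_sumE {R : comNzRingType} m (a b : R) :
  (1 - a) * nonempty_poch_sum m a b = poch b m - poch (a + b - 1) m.
Proof.
elim: m b => [|m IH] b; first by rewrite nonempty_poch_sum0 !poch0 mulr0 subrr.
rewrite nonempty_poch_sumS mulrDr mulrCA IH !pochSl.
rewrite (_ : a + (b + 1) - 1 = a + b) ?subrK; last by ring.
ring.
Qed.

Lemma gfunS {R : fieldType} (theta alpha : R) n :
  gfun theta alpha n.+1 = gfun theta alpha n + poch (theta + alpha) n / poch (theta + 1) n.
Proof. by rewrite /gfun big_nat_recr. Qed.

Lemma nonempty_poch_sum_gfun {R : fieldType} (theta alpha : R) m n :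
  (forall k, poch (theta + 1) k != 0) -> (1 <= n)%N ->
  poch (theta + alpha) n * nonempty_poch_sum m (1 - alpha) (theta + alpha + n%:R) =
  poch (theta + 1) n.-1 * poch (theta + n%:R) m *
    (gfun theta alpha (n + m)%N - gfun theta alpha n).
Proof.
move=> poch_neq0; elim: m n => [|m IH] n n_gt0.
  by rewrite nonempty_poch_sum0 addn0 subrr !mulr0.
rewrite nonempty_poch_sumS mulrDr mulrCA.
rewrite (_ : theta + alpha + n%:R + 1 = theta + alpha + n.+1%:R); last first.
  by rewrite -natr1 addrA.
rewrite (_ : 1 - alpha + (theta + alpha + n%:R) = theta + n%:R + 1); last by ring.
rewrite mulrA (mulrC (theta + alpha + n%:R)) -pochSr (IH n.+1 isT).
rewrite addnS -addSn gfunS pochSl.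
case: n n_gt0 => [//|n] _ /=.
have := poch_neq0 n.+1; rewrite pochSr mulf_eq0 negb_or => /andP[pn_neq0 thn_neq0].
rewrite -!natr1 (_ : theta + (n%:R + 1 + 1) = theta + (n%:R + 1) + 1); last by ring.
rewrite (_ : theta + (n%:R + 1) = theta + 1 + n%:R); last by ring.
by field; rewrite pn_neq0 thn_neq0.
Qed.

Lemma nonempty_poch_sum_cnm {R : realFieldType} (theta alpha : R) n m :
  0 < theta + 1 -> (1 <= n)%N ->
  poch (theta + alpha) n * nonempty_poch_sum m (1 - alpha) (theta + alpha + n%:R) =
  poch (theta + n%:R) m * cnm theta alpha n m.
Proof.
move=> theta1_gt0 n_gt0.
have poch1_neq0 k : poch (theta + 1) k != 0 by exact/lt0r_neq0/poch_gt0.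
have pochn_neq0 : poch (theta + n%:R) m != 0.
  apply/lt0r_neq0/poch_gt0; have : 1 <= n%:R :> R by rewrite ler1n.
  lra.
rewrite /cnm; case: ifP => [alpha_lt0|_]; last by rewrite nonempty_poch_sum_gfun //; ring.
have alpha_neq0 : alpha != 0 by rewrite lt_eqF.
have := nonempty_poch_sumE m (1 - alpha) (theta + alpha + n%:R).
rewrite (_ : 1 - (1 - alpha) = alpha) ?subKr //.
rewrite (_ : 1 - alpha + (theta + alpha + n%:R) - 1 = theta + n%:R); last by ring.
move=> sumE; apply: (mulfI alpha_neq0); rewrite mulrCA sumE.
by field; rewrite pochn_neq0 alpha_neq0.
Qed.

Definition block_weight {R : nzRingType} (alpha theta : R) N (b : seq bool) : R :=
  poch (1 - alpha) (bsize b).-1 * poch (theta + alpha) (N - bsize b).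

Definition ofa_weight {R : nzRingType} (alpha theta : R) N (g : seq (seq bool)) : R :=
  \prod_(b <- g) block_weight alpha theta N b.

Fixpoint blockseqs (N l : nat) : seq (seq (seq bool)) :=
  if l is l'.+1 then [seq b :: r | b <- bitseqs N, r <- blockseqs N l'] else [:: [::]].

Lemma mem_blockseqs N l g :
  (g \in blockseqs N l) = (size g == l) && all (fun b => size b == N) g.
Proof.
elim: l g => [|l IH] g /=; first by rewrite inE; case: g.
apply/allpairsP/idP => [[[b r] [/= b_in r_in ->]]|].
  by move: b_in r_in; rewrite /= mem_bitseqs IH eqSS => -> ->.
case: g => [//|b r] /= /andP[/eqP[/eqP r_size] /andP[b_size r_sizes]].
by exists (b, r); rewrite /= mem_bitseqs IH r_size b_size r_sizes.
Qed.

Lemma uniq_blockseqs N l : uniq (blockseqs N l).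
Proof.
elim: l => [|l IH] //=; apply: allpairs_uniq => //; first exact: uniq_bitseqs.
by move=> [b r] [b' r'] _ _ /= [-> ->].
Qed.

Lemma has_take {n : nat} {b : seq bool} : has id (take n b) -> has id b.
Proof. by rewrite -{2}(cat_take_drop n b) has_cat => ->. Qed.

Lemma ofa_restrict_comp n p g : (n <= p)%N ->
  ofa_restrict n (ofa_restrict p g) = ofa_restrict n g.
Proof.
move=> n_le_p; rewrite /ofa_restrict; elim: g => [|b g IH] //=.
case: (boolP (has id (take p b))) => [_|hasNp] /=; first by rewrite take_takel // IH.
rewrite IH; case: (boolP (has id (take n b))) => // has_n.
by move: has_n; rewrite -(take_takel _ n_le_p) => /has_take; rewrite (negbTE hasNp).
Qed.

Lemma ofa_restrict_id n g : is_ofa n g -> ofa_restrict n g = g.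
Proof.
rewrite /ofa_restrict; elim: g => [|b g IH] //= /andP[/andP[/eqP size_b has_b] ofa_g].
by rewrite take_oversize ?size_b // has_b IH.
Qed.

Lemma size_ofa_restrict n g : size g = (size (ofa_restrict n g) + new_count n g)%N.
Proof.
rewrite /ofa_restrict /new_count; elim: g => [|b g IH] //=.
by case: (has id (take n b)) => /=; rewrite IH ?addnS.
Qed.

Definition is_extension (n : nat) (f : seq (seq bool)) (y : nat) (g : seq (seq bool)) :=
  all (has id) g && (ofa_restrict n g == f) && (new_count n g == y).

Lemma is_extension_cons n f y b r :
  is_extension n f y (b :: r) =
  if has id (take n b) then
    if f is x :: f0 then (take n b == x) && is_extension n f0 y r else false
  else has id b && (if y is y'.+1 then is_extension n f y' r else false).
Proof.
rewrite /is_extension /ofa_restrict /new_count /=.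
case: (boolP (has id (take n b))) => [old|new] /=.
  rewrite (has_take old) /=; case: f => [|x f0] /=; first by rewrite andbF.
  by rewrite eqseq_cons add0n -!andbA andbCA.
by rewrite add1n; case: y => [|y]; rewrite ?andbF // eqSS -!andbA.
Qed.

Section ExtensionMass.
Variables (R : comNzRingType) (alpha theta : R) (n N : nat).

Definition new_block_mass : R :=
  \sum_(b <- bitseqs N | ~~ has id (take n b) && has id b) block_weight alpha theta N b.

Definition old_block_mass (x : seq bool) : R :=
  \sum_(b <- bitseqs N | has id (take n b) && (take n b == x)) block_weight alpha theta N b.

Definition extension_mass (l : nat) (f : seq (seq bool)) (y : nat) : R :=
  \sum_(g <- blockseqs N l | is_extension n f y g) ofa_weight alpha theta N g.

Lemma extension_massS l f y :
  extension_mass l.+1 f y =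
  new_block_mass * (if y is y'.+1 then extension_mass l f y' else 0) +
  (if f is x :: f0 then old_block_mass x * extension_mass l f0 y else 0).
Proof.
have first_block b :
    \sum_(r <- blockseqs N l | is_extension n f y (b :: r)) ofa_weight alpha theta N (b :: r) =
    (if ~~ has id (take n b) && has id b then block_weight alpha theta N b else 0) *
      (if y is y'.+1 then extension_mass l f y' else 0) +
    (if f is x :: f0 then
       (if has id (take n b) && (take n b == x) then block_weight alpha theta N b else 0) *
       extension_mass l f0 y
     else 0).
  under eq_bigl do rewrite is_extension_cons.
  under eq_bigr do rewrite /ofa_weight big_cons.
  rewrite -big_distrr /=.
  case: (has id (take n b)) => /=.
    case: f => [|x f0]; first by rewrite big_pred0_eq mulr0 mul0r addr0.
    rewrite mul0r add0r; case: (take n b == x) => //=.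
    by rewrite big_pred0_eq mulr0 mul0r.
  rewrite (_ : (if f is _ :: f0 then 0 * _ else 0) = 0); last by case: f => *; rewrite ?mul0r.
  rewrite addr0; case: (has id b) => /=; last by rewrite big_pred0_eq mulr0 mul0r.
  by case: y => [|y]; rewrite ?big_pred0_eq ?mulr0.
rewrite {1}/extension_mass /= big_mkcond big_allpairs_dep /=.
under eq_bigr do rewrite -big_mkcond first_block.
rewrite big_split /= -big_distrl /=.
congr (_ + _); first by congr (_ * _); rewrite /new_block_mass [RHS]big_mkcond.
case: f {first_block} => [|x f0]; first by rewrite big1.
by rewrite -big_distrl /old_block_mass [in RHS]big_mkcond.
Qed.

Lemma extension_mass_closed f y :
  extension_mass (size f + y)%N f y =
  'C(size f + y, size f)%:R * new_block_mass ^+ y * \prod_(x <- f) old_block_mass x.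
Proof.
suff closed l f' y' : (size f' + y')%N = l -> extension_mass l f' y' =
    'C(size f' + y', size f')%:R * new_block_mass ^+ y' * \prod_(x <- f') old_block_mass x.
  exact: closed.
elim: l f' y' {f y} => [|l IH] f y.
  case: f => [|//]; case: y => [|//] _.
  by rewrite /extension_mass /= big_mkcond big_seq1 /ofa_weight !big_nil bin0 !mulr1.
rewrite extension_massS; case: f => [|x f0]; case: y => [|y] //= [size_l].
- by rewrite IH //= !bin0 big_nil exprS; ring.
- by rewrite IH //= big_cons !addn0 !binn; ring.
- have size_l' : (size (x :: f0) + y)%N = l by rewrite /= addSnnS.
  rewrite (IH _ _ size_l') (IH _ _ size_l) big_cons [size (x :: f0)]/=.
  rewrite addSnnS [in RHS]addSn [in RHS]binS natrD exprS; ring.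
Qed.

End ExtensionMass.


Lemma new_block_massE {R : comNzRingType} (alpha theta : R) n m :
  new_block_mass alpha theta n (n + m)%N =
  poch (theta + alpha) n * nonempty_poch_sum m (1 - alpha) (theta + alpha + n%:R).
Proof.
set w := block_weight alpha theta (n + m)%N.
have split_first u : u \in bitseqs n ->
    \sum_(v <- bitseqs m)
      (if ~~ has id (take n (u ++ v)) && has id (u ++ v) then w (u ++ v) else 0) =
    if ~~ has id u then \sum_(v <- bitseqs m | has id v) w (u ++ v) else 0.
  rewrite mem_bitseqs => /eqP size_u.
  under eq_bigr do rewrite (take_size_cat _ size_u) has_cat.
  by case: (has id u) => /=; [rewrite big1 | rewrite -big_mkcond].
rewrite /new_block_mass big_mkcond big_bitseqsD big_seq.
under eq_bigr => u u_in do rewrite (split_first u u_in).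
rewrite -big_seq -big_mkcond big_bitseqs_hasNid /nonempty_poch_sum mulr_sumr.
rewrite big_seq_cond [RHS]big_seq_cond; apply: eq_bigr => v /andP[+ _].
rewrite mem_bitseqs => /eqP size_v.
rewrite /w /block_weight /bsize count_cat count_nseq mul0n add0n.
have -> : (n + m - count id v = n + count negb v)%N.
  by have := count_id_negb v; rewrite size_v; lia.
by rewrite pochD mulrCA.
Qed.

Lemma old_block_massE {R : comNzRingType} (alpha theta : R) n m x :
  size x = n -> has id x ->
  old_block_mass alpha theta n (n + m)%N x =
  block_weight alpha theta n x * poch (theta + n%:R) m.
Proof.
move=> size_x has_x; set w := block_weight alpha theta (n + m)%N.
have split_first u : u \in bitseqs n ->
    \sum_(v <- bitseqs m)
      (if has id (take n (u ++ v)) && (take n (u ++ v) == x) then w (u ++ v) else 0) =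
    if has id u && (u == x) then \sum_(v <- bitseqs m) w (u ++ v) else 0.
  rewrite mem_bitseqs => /eqP size_u.
  under eq_bigr do rewrite (take_size_cat _ size_u).
  by case: ifP => _; last rewrite big1.
rewrite /old_block_mass big_mkcond big_bitseqsD big_seq.
under eq_bigr => u u_in do rewrite (split_first u u_in).
rewrite -big_seq (bigD1_seq x) ?uniq_bitseqs ?mem_bitseqs ?size_x //= eqxx has_x.
rewrite [X in _ + X]big1 ?addr0; last by move=> u /negbTE ->; rewrite andbF.
have [x_gt0 x_le] : (0 < count id x)%N /\ (count id x <= n)%N.
  by rewrite -has_count has_x -size_x count_size.
set cx := count id x.
rewrite big_seq_cond (eq_bigr (fun v => block_weight alpha theta n x *
    (poch (1 - alpha + cx.-1%:R) (count id v) *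
     poch (theta + alpha + (n - cx)%:R) (count negb v)))); last first.
  move=> v /andP[]; rewrite mem_bitseqs => /eqP size_v _.
  rewrite /w /block_weight /bsize count_cat -/cx.
  have -> : ((cx + count id v).-1 = cx.-1 + count id v)%N by lia.
  have -> : (n + m - (cx + count id v) = (n - cx) + count negb v)%N.
    by have := count_id_negb v; rewrite size_v; lia.
  by rewrite !pochD; ring.
rewrite -big_seq_cond -mulr_sumr poch_vandermonde.
have n_eq : n%:R = cx.-1%:R + (n - cx)%:R + 1 :> R.
  by rewrite -natrD natr1; congr _%:R; lia.
by rewrite n_eq; congr (_ * poch _ _); ring.
Qed.

Lemma prod_old_block_mass {R : comNzRingType} (alpha theta : R) n m f :
  is_ofa n f ->
  \prod_(x <- f) old_block_mass alpha theta n (n + m)%N x =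
  ofa_weight alpha theta n f * poch (theta + n%:R) m ^+ size f.
Proof.
rewrite /ofa_weight; elim: f => [|x f IH] /=; first by rewrite !big_nil mulr1.
move=> /andP[/andP[/eqP size_x has_x] ofa_f].
by rewrite !big_cons old_block_massE // IH // exprS; ring.
Qed.


Lemma measure_preimage_seq (R : realType) d (T : measurableType d) (U : eqType)
    (mu : {measure set T -> \bar R}) (G : T -> U) (L : seq U) :
  (forall u, measurable [set w | G w = u]) -> uniq L ->
  measurable [set w | G w \in L] /\
  mu [set w | G w \in L] = \sum_(u <- L) mu [set w | G w = u].
Proof.
move=> G_meas; elim: L => [|u L IH] /=.
  by rewrite (_ : [set w | _] = set0) ?big_nil ?measure0 //; apply/seteqP; split.
move=> /andP[u_notin /IH [L_meas muL]].
have -> : [set w | G w \in u :: L] = [set w | G w = u] `|` [set w | G w \in L].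
  apply/seteqP; split => w /=; rewrite in_cons.
    by case/orP => [/eqP|]; [left|right].
  by case => [->|->]; rewrite ?eqxx ?orbT.
split; first exact: measurableU.
rewrite measureU ?big_cons //; first by rewrite -muL.
by apply/seteqP; split => w //= [Gu GL]; move: u_notin; rewrite -Gu GL.
Qed.

Section GibbsFeatureModel.
Variables (R : realType) (d : measure_display) (Omega : measurableType d).
Variables (P : probability Omega R) (alpha theta : R) (V : nat -> nat -> R).
Variable F : nat -> Omega -> seq (seq bool).
Hypothesis F_ofa : forall N w, is_ofa N (F N w).
Hypothesis F_cons : forall N w, F N w = ofa_restrict N (F N.+1 w).
Hypothesis F_meas : forall N f, measurable [set w | F N w = f].
Hypothesis F_law : forall N f, (1 <= N)%N -> is_ofa N f ->
  P [set w | F N w = f] = (gibbs_efpf alpha theta V N f)%:E.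

Lemma F_restrict n j w : F n w = ofa_restrict n (F (n + j)%N w).
Proof.
elim: j => [|j IH]; first by rewrite addn0 ofa_restrict_id.
by rewrite IH addnS F_cons ofa_restrict_comp // leq_addr.
Qed.

Lemma new_count_eventE n m f y :
  [set w | new_count n (F (n + m)%N w) = y] `&` [set w | F n w = f] =
  [set w | F (n + m)%N w \in
    [seq g <- blockseqs (n + m)%N (size f + y)%N | is_extension n f y g]].
Proof.
apply/seteqP; split => w /=; last first.
  rewrite mem_filter => /andP[/andP[/andP[_ /eqP restr] /eqP new] _].
  by rewrite (F_restrict n m) restr.
move=> [new restr]; have /allP ofa_w := F_ofa (n + m)%N w.
rewrite mem_filter mem_blockseqs /is_extension -F_restrict restr new !eqxx !andbT.
rewrite (size_ofa_restrict n (F _ w)) -F_restrict restr new eqxx /=.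
by apply/andP; split; apply/allP => b /ofa_w /andP[].
Qed.

Lemma joint_probE n m f y : (1 <= n)%N ->
  P ([set w | new_count n (F (n + m)%N w) = y] `&` [set w | F n w = f]) =
  (V (n + m)%N (size f + y)%N * extension_mass alpha theta n (n + m)%N (size f + y)%N f y)%:E.
Proof.
move=> n_gt0; rewrite new_count_eventE.
have ext_uniq := filter_uniq (is_extension n f y) (uniq_blockseqs (n + m)%N (size f + y)%N).
have [_ ->] := measure_preimage_seq P (F_meas (n + m)%N) ext_uniq.
rewrite big_filter big_seq_cond (eq_bigr (fun g =>
    (V (n + m)%N (size f + y)%N * ofa_weight alpha theta (n + m)%N g)%:E)); last first.
  move=> g /andP[]; rewrite mem_blockseqs => /andP[/eqP size_g sizes] ext.
  rewrite -size_g -[RHS]/((gibbs_efpf alpha theta V (n + m)%N g)%:E).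
  apply: F_law; first exact: leq_trans n_gt0 (leq_addr _ _).
  apply/allP => b b_in; rewrite (allP sizes b b_in).
  by move: ext => /andP[/andP[/allP -> //]].
by rewrite sumEFin -big_seq_cond -mulr_sumr.
Qed.

End GibbsFeatureModel.

Theorem theorem3 (R : realType) (d : measure_display) (Omega : measurableType d)
  (P : probability Omega R) (alpha theta : R) (V : nat -> nat -> R)
  (F : nat -> Omega -> seq (seq bool))
  (halpha : alpha < 1) (htheta : - alpha < theta)
  (hV : gibbs_weights alpha theta V)
  (hF_ofa : forall N w, is_ofa N (F N w))
  (hF_cons : forall N w, F N w = ofa_restrict N (F N.+1 w))
  (hF_meas : forall N f, measurable [set w | F N w = f])
  (hF_law : forall N f, (1 <= N)%N -> is_ofa N f ->
     P [set w | F N w = f] = (gibbs_efpf alpha theta V N f)%:E) :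
  forall (n m : nat) (f : seq (seq bool)) (y : nat),
    (1 <= n)%N -> (1 <= m)%N -> is_ofa n f ->
    P [set w | F n w = f] != 0%E ->
    condprob P [set w | new_count n (F (n + m)%N w) = y] [set w | F n w = f]
    = 'C(size f + y, size f)%:R * (V (n + m)%N (size f + y)%N / V n (size f))
      * (poch (theta + n%:R) m) ^+ (size f + y)%N * (cnm theta alpha n m) ^+ y.
Proof.
move=> n m f y n_gt0 _ ofa_f Pf_neq0.
have Pf := hF_law n f n_gt0 ofa_f; rewrite /gibbs_efpf -/(ofa_weight _ _ _ _) in Pf.
have [Vn_neq0 Wf_neq0] : V n (size f) != 0 /\ ofa_weight alpha theta n f != 0.
  by apply/andP; rewrite -negb_or -mulf_eq0; apply: contra Pf_neq0; rewrite Pf => /eqP ->.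
rewrite /condprob (joint_probE hF_ofa hF_cons hF_meas hF_law) // Pf /=.
rewrite extension_mass_closed new_block_massE nonempty_poch_sum_cnm //; last by lra.
rewrite prod_old_block_mass // exprMn exprD.
by field; rewrite Vn_neq0 Wf_neq0.
Qed.
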